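(* Let $q=AB$ be a two-atom query over $R$ satisfying the standing assumption below and the zig-zag property. For every database $D$, every repair $r$ of $D$ and all facts $a,b$: if $r\models q(ab)$ then $\{a\}\in\Delta_2(q,D)$ or there exists a repair $s$ of $D$ such that $q(s)\subsetneq q(r)$.
   Context: $R$ is a relation symbol of arity $k\ge1$ whose first $l$ positions form its primary key. Facts $R(\bar a)$, atoms $R(\bar x)$; $\overline{\mathrm{key}}(t)$ is the tuple of the first $l$ entries of $t$; $a\sim b$ iff $\overline{\mathrm{key}}(a)=\overline{\mathrm{key}}(b)$. A database is a finite set of facts; a block is a maximal set of pairwise key-equal facts; a repair is a $\subseteq$-maximal subset with no two distinct key-equal facts. For a set of facts $S$, a solution of $q$ in $S$ is a pair $(\mu(A),\mu(B))$ with $\mu$ a mapping from variables to elements and $\mu(A),\mu(B)\in S$; $q(S)$ is the set of solutions and $S\models q(ab)$ means $(a,b)\in q(S)$; $S$ satisfies $q$ if $q(S)\neq\emptyset$. Zig-zag property: for every database $D$ and facts $a,b,b',c$ of $D$ with $a\not\sim c$, $a\ne b$, $b\sim b'$, if $D\models q(ab)$ and $D\models q(cb')$ then $D\models q(ab')$. Greedy fixpoint: a $k$-set of $D$ is $S\subseteq D$ with $|S|\le k$ and at most one fact per block; $\Delta_k(q,D)$ is the least set of $k$-sets containing every $k$-set satisfying $q$ and containing a $k$-set $S$ whenever some block $B$ of $D$ is such that for every $u\in B$ some $S'\subseteq S\cup\{u\}$ lies in $\Delta_k(q,D)$. Standing assumption: $\overline{\mathrm{key}}(A)\ne\overline{\mathrm{key}}(B)$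 and $q$ is not equivalent over all consistent databases to a single-atom query. *)

From mathcomp Require Import all_boot finmap.
Set Implicit Arguments. Unset Strict Implicit. Unset Printing Implicit Defensive.
Local Open Scope fset_scope.

(* Conventions: the domain of elements is nat; variables are nat.
   A fact R(a_1..a_k) is a k.-tuple nat; an atom R(x_1..x_k) is a
   k.-tuple of variables (nat).  The key is the first l positions. *)

Definition fact (k : nat) := k.-tuple nat.

Definition keyeq (k l : nat) (a b : fact k) : bool :=
  take l (tval a) == take l (tval b).

Definition inst (k : nat) (mu : nat -> nat) (A : k.-tuple nat) : fact k :=
  map_tuple mu A.

Definition sol (k : nat) (A B : k.-tuple nat) (S : {fset fact k}) (a b : fact k) : Prop :=
  exists mu : nat -> nat, inst mu A = a /\ inst mu B = b /\ a \in S /\ b \in S.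

Definition sat (k : nat) (A B : k.-tuple nat) (S : {fset fact k}) : Prop :=
  exists a b, sol A B S a b.

Definition consistent (k l : nat) (S : {fset fact k}) : Prop :=
  forall a b, a \in S -> b \in S -> keyeq l a b -> a = b.

Definition repair (k l : nat) (D r : {fset fact k}) : Prop :=
  r `<=` D /\ consistent l r /\
  forall r' : {fset fact k}, r `<=` r' -> r' `<=` D -> consistent l r' -> r' = r.

Definition sol_strict_sub (k : nat) (A B : k.-tuple nat) (s r : {fset fact k}) : Prop :=
  (forall a b, sol A B s a b -> sol A B r a b) /\
  exists a b, sol A B r a b /\ ~ sol A B s a b.

Definition zigzag (k l : nat) (A B : k.-tuple nat) : Prop :=
  forall (D : {fset fact k}) (a b b' c : fact k),
    a \in D -> b \in D -> b' \in D -> c \in D ->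
    ~~ keyeq l a c -> a != b -> keyeq l b b' ->
    sol A B D a b -> sol A B D c b' -> sol A B D a b'.

Definition equiv_single_atom (k l : nat) (A B : k.-tuple nat) : Prop :=
  exists C : k.-tuple nat, forall D : {fset fact k}, consistent l D ->
    (sat A B D <-> exists mu : nat -> nat, inst mu C \in D).

Definition kset (k l K : nat) (D S : {fset fact k}) : Prop :=
  S `<=` D /\ #|` S| <= K /\ consistent l S.

Inductive Delta (k l K : nat) (A B : k.-tuple nat) (D : {fset fact k})
  : {fset fact k} -> Prop :=
| Delta_base : forall S, kset l K D S -> sat A B S -> Delta l K A B D S
| Delta_step : forall S, kset l K D S ->
    (exists d, d \in D /\
      forall u, u \in D -> keyeq l u d ->
        exists S', S' `<=` (u |` S) /\ Delta l K A B D S') ->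
    Delta l K A B D S.

From mathcomp Require Import all_boot finmap.
From Stdlib Require Import Classical.
Set Implicit Arguments. Unset Strict Implicit. Unset Printing Implicit Defensive.
Local Open Scope fset_scope.

(* Assume [{a}] is not in Delta_2.  Starting from [r], repeatedly pick a
   solution (x, y) of the current repair s in which x is a or a fact outside r
   and y is in r, and replace y by a key-equal fact u witnessing that {a, x}
   cannot be completed within the block of y, so that neither {a, u} nor
   {x, u} is in Delta_2.  Every fact n brought in this way comes with a
   solution (p, g) of D with p in s, p <> g, g ~ n and {p, n} not in Delta_2;
   by zig-zag, n is then never the second fact of a solution in s.  Each swap
   removes a fact of r, so the process stops, at a repair whose solutions all
   lie in r and which no longer contains the solution (a, b). *)

Lemma card_swapI (T : choiceType) (s r : {fset T}) (u y : T) :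
  u \notin r -> y \in s -> y \in r -> #|` (u |` (s `\ y)) `&` r| < #|` s `&` r|.
Proof.
move=> ur ys yr; have sub : (u |` (s `\ y)) `&` r `<=` (s `&` r) `\ y.
  apply/fsubsetP => z; rewrite !inE => /andP[/predU1P[-> | /andP[-> ->]] zr] //.
  by rewrite zr in ur.
apply: leq_ltn_trans (fsubset_leq_card sub) _.
by rewrite [X in _ < X](cardfsD1 y) !inE ys yr.
Qed.

Section KeyEquality.
Variables k l : nat.
Implicit Types a b c : fact k.

Lemma keyeq_refl a : keyeq l a a.
Proof. exact: eqxx. Qed.

Lemma keyeq_sym a b : keyeq l a b = keyeq l b a.
Proof. exact: eq_sym. Qed.

Lemma keyeq_trans b a c : keyeq l a b -> keyeq l b c -> keyeq l a c.
Proof. by rewrite /keyeq => /eqP ->. Qed.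

End KeyEquality.

Section Solutions.
Variables (k : nat) (A B : k.-tuple nat).
Implicit Types (S T : {fset fact k}) (a b : fact k).

Lemma sol_mem S a b : sol A B S a b -> a \in S /\ b \in S.
Proof. by case=> mu [_ [_ []]]. Qed.

Lemma sol_transfer S T a b : sol A B S a b -> a \in T -> b \in T -> sol A B T a b.
Proof. by case=> mu [muA [muB _]] aT bT; exists mu. Qed.

End Solutions.

Section Repairs.
Variables k l : nat.
Implicit Types D s : {fset fact k}.

Lemma repairP D s : repair l D s <->
  [/\ s `<=` D, consistent l s & forall d, d \in D -> exists2 x, x \in s & keyeq l x d].
Proof.
split=> [[sD [cs maxs]] | [sD cs covs]].
- split=> // d dD; apply/hasP; apply: contraT => /hasPn no_key.
  have ds : d \in s.
    rewrite -(maxs (d |` s)) ?fset1U1 ?fsubsetU1 //.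
      by rewrite fsubUset fsub1set dD.
    move=> x y; rewrite !inE => /predU1P[-> | xs] /predU1P[-> | ys] // xy.
    + by have := no_key y ys; rewrite keyeq_sym xy.
    + by have := no_key x xs; rewrite xy.
    + exact: cs.
  by have := no_key d ds; rewrite keyeq_refl.
- split=> //; split=> // s' ss' s'D cs'; apply/eqP; rewrite eqEfsubset ss' andbT.
  apply/fsubsetP => w ws'; have [x xs xw] := covs w (fsubsetP s'D w ws').
  by rewrite -(cs' x w (fsubsetP ss' x xs) ws' xw).
Qed.

Lemma repair_swap D s y u : repair l D s -> y \in s -> u \in D -> keyeq l u y ->
  repair l D (u |` (s `\ y)).
Proof.
move=> /repairP[sD cs covs] ys uD uy; apply/repairP; split.
- by rewrite fsubUset fsub1set uD (fsubset_trans (fsubsetDl s _) sD).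
- have u_alone x : x \in s `\ y -> ~ keyeq l u x.
    rewrite !inE => /andP[xy xs] ux; rewrite keyeq_sym in uy.
    by rewrite (cs y x ys xs (keyeq_trans uy ux)) eqxx in xy.
  move=> x z; rewrite !in_fset1U => /predU1P[-> | xs] /predU1P[-> | zs] // xz.
  + by case: (u_alone z zs).
  + by rewrite keyeq_sym in xz; case: (u_alone x xs).
  + by move: xs zs => /fsetD1P[_ xs] /fsetD1P[_ zs]; apply: cs.
- move=> d dD; have [x xs xd] := covs d dD.
  case: (eqVneq x y) xd => [-> | xy] xd.
    by exists u; [exact: fset1U1 | exact: keyeq_trans xd].
  by exists x => //; rewrite !inE xy xs orbT.
Qed.

Lemma kset_pair D s x y : s `<=` D -> consistent l s -> x \in s -> y \in s ->
  kset l 2 D [fset x; y].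
Proof.
move=> sD cs xs ys; have xys : [fset x; y] `<=` s by rewrite fsubUset !fsub1set xs ys.
split; first exact: fsubset_trans sD.
split; first by rewrite cardfs2 ltnS leq_b1.
by move=> u v /(fsubsetP xys) us /(fsubsetP xys) vs; apply: cs.
Qed.

End Repairs.

Section Database.
Variables (k l : nat) (A B : k.-tuple nat) (D : {fset fact k}).
Local Notation Delta2 := (Delta l 2 A B D).

Lemma Delta_sol s x y : s `<=` D -> consistent l s -> sol A B s x y -> Delta2 [fset x; y].
Proof.
move=> sD cs xy; have [xs ys] := sol_mem xy.
apply: Delta_base; first exact: kset_pair sD cs xs ys.
by exists x, y; apply: sol_transfer xy (fset21 x y) (fset22 x y).
Qed.

Lemma Delta_escape K S y : kset l K D S -> ~ Delta l K A B D S -> y \in D ->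
  exists u, [/\ u \in D, keyeq l u y & forall x, x \in S -> ~ Delta l K A B D [fset x; u]].
Proof.
move=> kS notS yD; apply: NNPP => no_u; apply: notS; apply: Delta_step => //.
exists y; split=> // u uD uy; apply: NNPP => notU.
apply: no_u; exists u; split=> // x xS xu; apply: notU.
by exists [fset x; u]; split=> //; rewrite fsubUset !fsub1set !inE eqxx xS orbT.
Qed.

Lemma zigzag_sol s p g x n : zigzag l A B -> s `<=` D -> consistent l s ->
  p \in s -> p != g -> keyeq l g n -> sol A B D p g -> sol A B s x n -> sol A B s p n.
Proof.
move=> zz sD cs ps pg gn pgD xn; have [xs ns] := sol_mem xn.
have [px | npx] := boolP (keyeq l p x); first by rewrite (cs p x ps xs px).
have [_ gD] := sol_mem pgD; have D_ := fsubsetP sD.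
have pnD : sol A B D p n := zz D p g n x (D_ p ps) gD (D_ n ns) (D_ x xs) npx pg gn pgD
  (sol_transfer xn (D_ x xs) (D_ n ns)).
exact: sol_transfer pnD ps ns.
Qed.

Section Exchange.
Variables (r : {fset fact k}) (a : fact k).
Hypotheses (repair_r : repair l D r) (a_in_r : a \in r) (notDelta_a : ~ Delta2 [fset a]).

Local Notation active s := (a |` (s `\` r)).

Definition guarded (s : {fset fact k}) (n : fact k) : Prop :=
  ~ Delta2 [fset a; n] /\
  exists p g, [/\ p \in active s, p != g, keyeq l g n, sol A B D p g & ~ Delta2 [fset p; n]].

Record invariant (s : {fset fact k}) : Prop := Invariant {
  invariant_repair : repair l D s;
  invariant_anchor : a \in s;
  invariant_guarded : forall n, n \in s `\` r -> guarded s n }.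

Definition settled (s : {fset fact k}) : Prop :=
  forall x y, x \in active s -> y \in r -> ~ sol A B s x y.

Lemma invariant_r : invariant r.
Proof. by split=> // n; rewrite inE andNb. Qed.

Lemma active_mem s x : a \in s -> x \in active s -> x \in s.
Proof. by move=> a_s; rewrite !inE => /predU1P[-> | /andP[]]. Qed.

Lemma active_neq s x y : y \in r -> y != a -> x \in active s -> x != y.
Proof.
move=> yr ya; rewrite !inE => /predU1P[-> | /andP[xr _]]; first by rewrite eq_sym.
by apply: contraNneq xr => ->.
Qed.

Lemma active_swap s u x y : y \in r -> y != a -> x \in active s -> x \in active (u |` (s `\ y)).
Proof.
move=> yr ya xa; have xy := active_neq yr ya xa.
by move: xa; rewrite !inE xy => /predU1P[-> | /andP[-> ->]]; rewrite ?eqxx ?orbT.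
Qed.

Lemma guarded_swap s u y n : y \in r -> y != a -> guarded s n -> guarded (u |` (s `\ y)) n.
Proof.
move=> yr ya [notDelta_an [p [g [pa pg gn pgD notDelta_pn]]]]; split=> //.
by exists p, g; split=> //; apply: active_swap.
Qed.

Lemma notDelta_active s x : invariant s -> x \in active s -> ~ Delta2 [fset a; x].
Proof.
case=> _ _ grd; rewrite in_fset1U => /predU1P[-> | /grd[] //].
by rewrite fsetUid.
Qed.

Lemma invariant_swap s x y : invariant s -> x \in active s -> y \in r -> sol A B s x y ->
  exists2 s', invariant s' & #|` s' `&` r| < #|` s `&` r|.
Proof.
move=> inv_s xa yr xy; have [rep_s a_s grd] := inv_s; have [sD [cs _]] := rep_s.
have [xs ys] := sol_mem xy; have notDelta_ax := notDelta_active inv_s xa.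
have ya : y != a.
  by apply: contra_notN notDelta_ax => /eqP <-; rewrite fsetUC; apply: Delta_sol xy.
have [u [uD uy notDelta_u]] :=
  Delta_escape (kset_pair sD cs a_s xs) notDelta_ax (fsubsetP sD y ys).
have notDelta_xu := notDelta_u x (fset22 a x).
have uy_neq : u != y by apply: contra_notN notDelta_xu => /eqP ->; apply: Delta_sol xy.
have ur : u \notin r.
  have [_ [cr _]] := repair_r.
  by apply: contraNN uy_neq => ur; apply/eqP; apply: cr.
exists (u |` (s `\ y)); last exact: card_swapI.
split; [exact: repair_swap | by rewrite !inE (eq_sym a y) ya a_s orbT |].
move=> n; rewrite !inE => /andP[nr /predU1P[-> | /andP[_ ns]]].
  split; first exact: notDelta_u (fset21 a x).
  exists x, y; split=> //; first exact: active_swap.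
  - exact: active_neq yr ya xa.
  - by rewrite keyeq_sym.
  - exact: sol_transfer xy (fsubsetP sD x xs) (fsubsetP sD y ys).
by apply: guarded_swap => //; apply: grd; rewrite inE nr ns.
Qed.

Lemma settled_sol s : zigzag l A B -> invariant s -> settled s ->
  forall x y, sol A B s x y -> sol A B r x y.
Proof.
move=> zz [[sD [cs _]] a_s grd] stl x y xy; have [xs ys] := sol_mem xy.
have yr : y \in r.
  apply/negPn/negP => yNr; have /grd[_ [p [g [pa pg gy pgD notDelta_py]]]] : y \in s `\` r.
    by rewrite inE yNr ys.
  by apply/notDelta_py/(Delta_sol sD cs)/(zigzag_sol zz sD cs (active_mem a_s pa) pg gy pgD xy).
have xr : x \in r.
  by apply/negPn/negP => xNr; apply: (stl x y) => //; rewrite !inE xNr xs orbT.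
exact: sol_transfer xy xr yr.
Qed.

Lemma invariant_settled s : invariant s -> exists2 s', invariant s' & settled s'.
Proof.
have [m] := ubnP #|` s `&` r|; elim: m s => // m IH s lt_m inv_s.
have [[x [y [xa yr xy]]] | stuck] :=
  classic (exists x y, [/\ x \in active s, y \in r & sol A B s x y]).
  have [s' inv_s' lt_s'] := invariant_swap inv_s xa yr xy.
  exact: IH (leq_trans lt_s' lt_m) inv_s'.
by exists s => // x y xa yr xy; apply: stuck; exists x, y.
Qed.

End Exchange.

End Database.

Theorem lemma6p3 (k l : nat) (A B : k.-tuple nat) :
  0 < k -> l <= k ->
  take l (tval A) != take l (tval B) ->
  ~ equiv_single_atom l A B ->
  zigzag l A B ->
  forall (D r : {fset fact k}) (a b : fact k),
    repair l D r -> sol A B r a b ->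
    Delta l 2 A B D [fset a] \/
    exists s : {fset fact k}, repair l D s /\ sol_strict_sub A B s r.
Proof.
move=> _ _ _ _ zz D r a b rep_r ab.
have [Delta_a | notDelta_a] := classic (Delta l 2 A B D [fset a]); [by left | right].
have [a_r b_r] := sol_mem ab.
have [s inv_s stl_s] := invariant_settled rep_r notDelta_a (invariant_r A B rep_r a_r).
exists s; split; first exact: invariant_repair inv_s.
split; first exact: settled_sol zz inv_s stl_s.
by exists a, b; split=> //; apply: stl_s b_r; apply: fset1U1.
Qed.
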